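(* There is an absolute constant $c>0$ such that the following holds. Let $A$ and $B$ be finite nonempty sets of real numbers, and suppose $A$ has distinct consecutive differences. Then \[ |A+B| \ge c\,|A|\,|B|^{1/2}. \] In particular, if $|A|=|B|$ then $|A+B|\ge c|A|^{3/2}$.
   Context: For finite $A,B\subset\mathbb{R}$, $A+B=\{a+b: a\in A, b\in B\}$. Writing $A=\{a_1<a_2<\dots<a_k\}$, the set $A$ has distinct consecutive differences if for $1\le i,j\le k-1$, $a_{i+1}-a_i=a_{j+1}-a_j$ implies $i=j$. *)

(* finite sets of reals are represented by duplicate-free lists. *)
From Stdlib Require Import Reals List.
Import ListNotations.
Open Scope R_scope.

Definition sumset (A B : list R) : list R :=
  flat_map (fun a => map (fun b => a + b) B) A.

Definition card (S : list R) : nat := length (nodup Req_EM_T S).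

Definition consecutive (A : list R) (x y : R) : Prop :=
  In x A /\ In y A /\ x < y /\ (forall z, In z A -> ~ (x < z /\ z < y)).

Definition distinct_consec_diffs (A : list R) : Prop :=
  forall x1 y1 x2 y2, consecutive A x1 y1 -> consecutive A x2 y2 ->
    y1 - x1 = y2 - x2 -> x1 = x2.

(* For b in B and consecutive elements x < x' of A, let t(b, x) count the elements of A + B
   in the interval (x + b, x' + b]; it is at least 1 because x' + b lies there.  For fixed b
   these intervals are disjoint, so the |B|(|A| - 1) values t sum to at most |B| |A + B|.
   On the other hand, the left end x + b and the value t(b, x) determine the right end
   x' + b, because the number of elements of A + B in (x + b, y] increases strictly with
   y along A + B; hence they determine the gap x' - x, hence x (the differences are
   distinct), hence b.  So each value of t is taken at most |A + B| times.  Positive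
   integers N_1, ..., N_P taking each value at most n times have P^2 <= 4 n (N_1 + ... + N_P),
   and this gives |A|^2 |B| <= 16 |A + B|^2. *)

From Stdlib Require Import Reals RList List Lia Lra.
Open Scope R_scope.
Open Scope bool_scope.

Section ListCounting.
Context {X : Type}.

Lemma NoDup_length_le_1 (l : list X) :
  NoDup l -> (forall x y, In x l -> In y l -> x = y) -> (length l <= 1)%nat.
Proof.
  intros Hl Heq. destruct l as [|a [|b l]]; simpl; try lia.
  exfalso. inversion Hl as [|? ? Ha _]; subst. apply Ha.
  rewrite (Heq a b) by (simpl; auto). now left.
Qed.

Lemma filter_length_lt (f g : X -> bool) (l : list X) (x : X) :
  NoDup l -> (forall y, In y l -> f y = true -> g y = true) ->
  In x l -> g x = true -> f x = false ->
  (length (filter f l) < length (filter g l))%nat.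
Proof.
  intros Hl Hfg Hx Hgx Hfx.
  destruct (Nat.lt_ge_cases (length (filter f l)) (length (filter g l))) as [|Hle];
    [assumption|exfalso].
  assert (Hgf : incl (filter g l) (filter f l)).
  { apply NoDup_length_incl; [now apply NoDup_filter|exact Hle|].
    intros y [Hy Hfy]%filter_In. apply filter_In; auto. }
  assert (Hxf : In x (filter f l)) by (apply Hgf, filter_In; auto).
  apply filter_In in Hxf as [_ Hxf]. congruence.
Qed.

Lemma filter_length_orb (f g : X -> bool) (l : list X) :
  (forall x, In x l -> f x = true -> g x = false) ->
  length (filter (fun x => f x || g x) l) = (length (filter f l) + length (filter g l))%nat.
Proof.
  induction l as [|a l IH]; intros Hdisj; [reflexivity|].
  assert (IHl := IH (fun x Hx => Hdisj x (or_intror Hx))).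
  specialize (Hdisj a (or_introl eq_refl)).
  simpl. destruct (f a); [rewrite (Hdisj eq_refl)|destruct (g a)]; simpl; lia.
Qed.

Lemma NoDup_flat_map {Y : Type} (F : X -> list Y) (l : list X) :
  NoDup l -> (forall x, In x l -> NoDup (F x)) ->
  (forall x x' y, In x l -> In x' l -> In y (F x) -> In y (F x') -> x = x') ->
  NoDup (flat_map F l).
Proof.
  induction l as [|a l IH]; intros Hl HF Hdisj; simpl; [constructor|].
  inversion Hl as [|? ? Hal Hl']; subst. apply NoDup_app.
  - apply HF. now left.
  - apply IH; [assumption| |]; intros; [apply HF | eapply Hdisj]; simpl; eauto.
  - intros y Hy [x [Hx Hyx]]%in_flat_map.
    assert (a = x) by (eapply Hdisj; simpl; eauto). subst. contradiction.
Qed.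

Lemma sum_length_filter_disjoint_le {Y : Type} (f : X -> Y -> bool) (L : list X) (S : list Y) :
  NoDup L -> NoDup S ->
  (forall x x' s, In x L -> In x' L -> In s S -> f x s = true -> f x' s = true -> x = x') ->
  (list_sum (map (fun x => length (filter (f x) S)) L) <= length S)%nat.
Proof.
  intros HL HS Hdisj. rewrite <- length_flat_map. apply NoDup_incl_length.
  - apply NoDup_flat_map; [assumption| intros; now apply NoDup_filter |].
    intros x x' s Hx Hx' [Hs Hxs]%filter_In [_ Hx's]%filter_In. eauto.
  - intros s [x [_ [Hs _]%filter_In]]%in_flat_map. exact Hs.
Qed.

Lemma mul_length_filter_gt_le_sum (t : X -> nat) (P : list X) (T : nat) :
  ((T + 1) * length (filter (fun p => negb (t p <=? T)) P) <= list_sum (map t P))%nat.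
Proof.
  induction P as [|a P IH]; simpl; [lia|].
  destruct (Nat.leb_spec (t a) T); simpl; lia.
Qed.

Section BoundedMultiplicity.
Variables (t : X -> nat) (P : list X) (n : nat).
Hypothesis t_pos : forall p, In p P -> (1 <= t p)%nat.
Hypothesis t_mult : forall tau, (length (filter (fun p => t p =? tau) P) <= n)%nat.

Lemma length_filter_le_level (T : nat) :
  (length (filter (fun p => t p <=? T) P) <= n * T)%nat.
Proof.
  induction T as [|T IH].
  - assert (Hnone : forall p, In p P -> (t p <=? 0) = false).
    { intros p Hp. apply Nat.leb_gt. specialize (t_pos p Hp). lia. }
    rewrite (filter_ext_in _ (fun _ => false) P Hnone), filter_false. simpl. lia.
  - assert (Hsplit : forall p, In p P -> (t p <=? S T) = (t p <=? T) || (t p =? S T)).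
    { intros p _. destruct (Nat.leb_spec (t p) (S T)), (Nat.leb_spec (t p) T),
        (Nat.eqb_spec (t p) (S T)); simpl; auto; lia. }
    rewrite (filter_ext_in _ _ P Hsplit), filter_length_orb.
    + specialize (t_mult (S T)). lia.
    + intros p _ Hle. apply Nat.leb_le in Hle. apply Nat.eqb_neq. lia.
Qed.

Lemma length_sq_le_mult_mul_sum :
  (0 < n)%nat -> (length P * length P <= 4 * n * list_sum (map t P))%nat.
Proof.
  intros Hn. set (N := length P).
  (* At most n T <= N / 2 values lie below the level T, and the others exceed T. *)
  set (T := (N / (2 * n))%nat).
  pose proof (Nat.div_mod N (2 * n) ltac:(lia)) as Hdiv.
  pose proof (Nat.mod_upper_bound N (2 * n) ltac:(lia)) as Hmod.
  pose proof (length_filter_le_level T) as Hlow.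
  pose proof (mul_length_filter_gt_le_sum t P T) as Hhigh.
  pose proof (filter_length (fun p => t p <=? T) P) as Hsplit.
  fold T in Hdiv. fold N in Hsplit.
  set (low := length (filter (fun p => t p <=? T) P)) in *.
  set (high := length (filter (fun p => negb (t p <=? T)) P)) in *.
  assert (Hhalf : (N <= 2 * high)%nat) by nia.
  assert (HT : (N <= 2 * n * (T + 1))%nat) by nia.
  assert (N * N <= 2 * n * (T + 1) * (2 * high))%nat by (apply Nat.mul_le_mono; assumption).
  nia.
Qed.

End BoundedMultiplicity.
End ListCounting.

Lemma NoDup_list_prod {X Y : Type} (B : list Y) (L : list X) :
  NoDup B -> NoDup L -> NoDup (list_prod B L).
Proof.
  intros HB HL. rewrite list_prod_as_flat_map. apply NoDup_flat_map; [assumption | |].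
  - intros b _. apply NoDup_map_NoDup_ForallPairs; [|assumption].
    intros x x' _ _ E. now injection E.
  - intros b b' p _ _ [x [<- _]]%in_map_iff [x' [E _]]%in_map_iff. now injection E.
Qed.

Lemma list_sum_list_prod_le {X Y : Type} (t : Y * X -> nat) (B : list Y) (L : list X) (c : nat) :
  (forall b, In b B -> (list_sum (map (fun x => t (b, x)) L) <= c)%nat) ->
  (list_sum (map t (list_prod B L)) <= length B * c)%nat.
Proof.
  induction B as [|b B IH]; intros Hb; simpl; [lia|].
  rewrite map_app, list_sum_app, map_map.
  assert (list_sum (map t (list_prod B L)) <= length B * c)%nat
    by (apply IH; intros; apply Hb; now right).
  specialize (Hb b (or_introl eq_refl)). lia.
Qed.

Definition Rltb (x y : R) : bool := if Rlt_dec x y then true else false.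
Definition Rleb (x y : R) : bool := if Rle_dec x y then true else false.

Lemma Rltb_true x y : Rltb x y = true <-> x < y.
Proof. unfold Rltb. destruct (Rlt_dec x y); intuition congruence. Qed.

Lemma Rleb_true x y : Rleb x y = true <-> x <= y.
Proof. unfold Rleb. destruct (Rle_dec x y); intuition congruence. Qed.

Lemma In_MinRlist (l : list R) : l <> nil -> In (MinRlist l) l.
Proof.
  induction l as [|a [|b l] IH]; intros Hne; [congruence | now left |].
  change (In (Rmin a (MinRlist (b :: l))) (a :: b :: l)).
  unfold Rmin. destruct Rle_dec; [now left | right; apply IH; discriminate].
Qed.

Definition has_succ (A : list R) (x : R) : bool := existsb (Rltb x) A.
Definition succ (A : list R) (x : R) : R := MinRlist (filter (Rltb x) A).

Lemma succ_spec A x :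
  has_succ A x = true ->
  In (succ A x) A /\ x < succ A x /\ forall z, In z A -> x < z -> succ A x <= z.
Proof.
  intros [z [Hz Hxz]]%existsb_exists.
  assert (Hne : filter (Rltb x) A <> nil).
  { intros E. assert (Hin : In z (filter (Rltb x) A)) by (apply filter_In; auto).
    rewrite E in Hin. contradiction. }
  destruct (proj1 (filter_In _ _ _) (In_MinRlist _ Hne)) as [Hs Hxs].
  apply Rltb_true in Hxs. unfold succ. repeat split; try assumption.
  intros w Hw Hxw. apply MinRlist_P1, filter_In. split; [assumption|]. now apply Rltb_true.
Qed.

Lemma succ_consecutive A x : In x A -> has_succ A x = true -> consecutive A x (succ A x).
Proof.
  intros Hx Hsucc. destruct (succ_spec A x Hsucc) as [Hs [Hxs Hmin]].
  repeat split; try assumption.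
  intros z Hz [Hxz Hzs]. specialize (Hmin z Hz Hxz). lra.
Qed.

Lemma has_succ_false A x : has_succ A x = false -> forall z, In z A -> z <= x.
Proof.
  intros Hnone z Hz. destruct (Rle_lt_dec z x) as [|Hxz]; [assumption|].
  assert (has_succ A x = true) by (apply existsb_exists; exists z; split; [|apply Rltb_true]; assumption).
  congruence.
Qed.

Definition in_Ioc (u v s : R) : bool := Rltb u s && Rleb s v.
Definition count_Ioc (S : list R) (u v : R) : nat := length (filter (in_Ioc u v) S).

Lemma in_Ioc_true u v s : in_Ioc u v s = true <-> u < s <= v.
Proof. unfold in_Ioc. rewrite Bool.andb_true_iff, Rltb_true, Rleb_true. tauto. Qed.

Lemma count_Ioc_lt S u v v' :
  NoDup S -> In v' S -> u < v -> v < v' -> (count_Ioc S u v < count_Ioc S u v')%nat.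
Proof.
  intros HS Hv' Huv Hvv'. apply (filter_length_lt _ _ _ v' HS); [| assumption | |].
  - intros s _ [Hus Hsv]%in_Ioc_true. apply in_Ioc_true. lra.
  - apply in_Ioc_true. lra.
  - apply Bool.not_true_is_false. intros [_ H]%in_Ioc_true. lra.
Qed.

Lemma count_Ioc_inj S u v v' :
  NoDup S -> In v S -> In v' S -> u < v -> u < v' ->
  count_Ioc S u v = count_Ioc S u v' -> v = v'.
Proof.
  intros HS Hv Hv' Huv Huv' E.
  destruct (Rtotal_order v v') as [Hlt | [Heq | Hgt]]; [| assumption |].
  - pose proof (count_Ioc_lt S u v v' HS Hv' Huv Hlt). lia.
  - pose proof (count_Ioc_lt S u v' v HS Hv Huv' Hgt). lia.
Qed.

Lemma In_nodup_sumset A B a b : In a A -> In b B -> In (a + b) (nodup Req_EM_T (sumset A B)).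
Proof.
  intros Ha Hb. apply nodup_In, in_flat_map. exists a. split; [assumption|].
  apply in_map_iff. now exists b.
Qed.

Lemma length_le_card_sumset A B : A <> nil -> NoDup B -> (length B <= card (sumset A B))%nat.
Proof.
  intros HA HB. destruct A as [|a A]; [congruence|].
  rewrite <- (length_map (fun b => a + b) B). apply NoDup_incl_length.
  - apply NoDup_map_NoDup_ForallPairs; [|assumption]. intros u v _ _ E. lra.
  - intros s [b [<- Hb]]%in_map_iff. apply In_nodup_sumset; [now left | assumption].
Qed.

Lemma length_le_count_has_succ A :
  NoDup A -> (length A <= length (filter (has_succ A) A) + 1)%nat.
Proof.
  intros HA. rewrite <- (filter_length (has_succ A) A).
  enough (length (filter (fun x => negb (has_succ A x)) A) <= 1)%nat by lia.
  apply NoDup_length_le_1; [now apply NoDup_filter|].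
  intros x y [Hx Hxmax]%filter_In [Hy Hymax]%filter_In.
  apply Bool.negb_true_iff in Hxmax, Hymax.
  pose proof (has_succ_false A x Hxmax y Hy). pose proof (has_succ_false A y Hymax x Hx). lra.
Qed.

Section Gaps.
Variables A B : list R.
Hypotheses (A_nodup : NoDup A) (B_nodup : NoDup B) (A_dcd : distinct_consec_diffs A).

Let S := nodup Req_EM_T (sumset A B).
Let gap_starts := filter (has_succ A) A.
Let gap_count (p : R * R) : nat := let (b, x) := p in count_Ioc S (x + b) (succ A x + b).

Lemma gap_starts_spec x : In x gap_starts -> In x A /\ has_succ A x = true.
Proof. apply filter_In. Qed.

Lemma gap_count_pos p : In p (list_prod B gap_starts) -> (1 <= gap_count p)%nat.
Proof.
  destruct p as [b x]. intros [Hb [Hx Hsucc]%gap_starts_spec]%in_prod_iff.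
  destruct (succ_spec A x Hsucc) as [Hs [Hxs _]].
  assert (Hin : In (succ A x + b) (filter (in_Ioc (x + b) (succ A x + b)) S)).
  { apply filter_In. split; [now apply In_nodup_sumset | apply in_Ioc_true; lra]. }
  simpl. unfold count_Ioc. destruct (filter _ S); [contradiction | simpl; lia].
Qed.

Lemma gap_count_sum_le :
  (list_sum (map gap_count (list_prod B gap_starts)) <= length B * length S)%nat.
Proof.
  apply list_sum_list_prod_le. intros b _.
  apply (sum_length_filter_disjoint_le (fun x => in_Ioc (x + b) (succ A x + b))).
  - now apply NoDup_filter.
  - apply NoDup_nodup.
  - intros x y s [Hx Hxs]%gap_starts_spec [Hy Hys]%gap_starts_spec _
      Hsx%in_Ioc_true Hsy%in_Ioc_true.
    destruct (succ_spec A x Hxs) as [_ [_ Hxmin]], (succ_spec A y Hys) as [_ [_ Hymin]].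
    destruct (Rtotal_order x y) as [Hlt | [Heq | Hgt]]; [| assumption |].
    + specialize (Hxmin y Hy Hlt). lra.
    + specialize (Hymin x Hx Hgt). lra.
Qed.

Lemma gap_count_fibre_le tau :
  (length (filter (fun p => gap_count p =? tau) (list_prod B gap_starts)) <= length S)%nat.
Proof.
  set (F := filter _ _).
  rewrite <- (length_map (fun p => snd p + fst p) F). apply NoDup_incl_length.
  - apply NoDup_map_NoDup_ForallPairs.
    + intros [b x] [b' x'] [[Hb [Hx Hxs]%gap_starts_spec]%in_prod_iff Htx]%filter_In
        [[Hb' [Hx' Hxs']%gap_starts_spec]%in_prod_iff Htx']%filter_In Hstart.
      simpl in Hstart, Htx, Htx'. apply Nat.eqb_eq in Htx, Htx'.
      destruct (succ_spec A x Hxs) as [Hs [Hxlt _]], (succ_spec A x' Hxs') as [Hs' [Hxlt' _]].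
      assert (Hend : succ A x + b = succ A x' + b').
      { apply (count_Ioc_inj S (x + b)).
        - apply NoDup_nodup.
        - now apply In_nodup_sumset.
        - now apply In_nodup_sumset.
        - lra.
        - lra.
        - rewrite Hstart at 2. congruence. }
      assert (x = x') as <-.
      { apply (A_dcd x (succ A x) x' (succ A x')); try (now apply succ_consecutive). lra. }
      f_equal. lra.
    + apply NoDup_filter, NoDup_list_prod; [assumption | now apply NoDup_filter].
  - intros s [[b x] [<- [[Hb [Hx _]%gap_starts_spec]%in_prod_iff _]%filter_In]]%in_map_iff.
    simpl. now apply In_nodup_sumset.
Qed.

End Gaps.

Lemma gap_count_arith (k l m n M : nat) :
  (1 <= m -> m <= n -> k <= l + 1 ->
  m * l * (m * l) <= 4 * n * M -> M <= m * n -> k * k * m <= (4 * n) * (4 * n))%nat.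
Proof.
  intros Hm Hmn Hk Hkey Hsum.
  assert (Hl : (m * (l * l * m) <= m * (4 * n * n))%nat).
  { assert (4 * n * M <= 4 * n * (m * n))%nat
      by (apply Nat.mul_le_mono; [apply le_n | assumption]).
    nia. }
  apply Nat.mul_le_mono_pos_l in Hl; [|lia].
  assert (k * k * m <= (l + 1) * (l + 1) * m)%nat
    by (apply Nat.mul_le_mono_r, Nat.mul_le_mono; assumption).
  assert (Hexp : ((l + 1) * (l + 1) * m = l * l * m + 2 * (l * m) + m)%nat) by ring.
  assert (l * m <= l * l * m + m)%nat by nia.
  assert (m <= n * n)%nat by nia.
  lia.
Qed.

Lemma INR_mul_sqrt_le (k m c : nat) : (k * k * m <= c * c)%nat -> INR k * sqrt (INR m) <= INR c.
Proof.
  intros H. apply le_INR in H. rewrite !mult_INR in H.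
  pose proof (pos_INR k). pose proof (pos_INR m). pose proof (pos_INR c).
  pose proof (sqrt_sqrt (INR m) (pos_INR m)). pose proof (sqrt_pos (INR m)). nra.
Qed.

Theorem theorem1 :
  exists c : R, 0 < c /\
    forall A B : list R,
      NoDup A -> NoDup B -> A <> nil -> B <> nil ->
      distinct_consec_diffs A ->
      INR (card (sumset A B)) >= c * INR (length A) * sqrt (INR (length B)).
Proof.
  exists (1 / 4). split; [lra|]. intros A B HA HB HAne HBne Hdcd.
  pose proof (length_le_card_sumset A B HAne HB) as Hmn.
  unfold card in *.
  assert (Hm : (1 <= length B)%nat) by (destruct B; [congruence | simpl; lia]).
  pose proof (length_sq_le_mult_mul_sum _ _ _ (gap_count_pos A B)
    (gap_count_fibre_le A B HA HB Hdcd) ltac:(lia)) as Hkey.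
  rewrite length_prod in Hkey.
  pose proof (gap_count_arith _ _ _ _ _ Hm Hmn (length_le_count_has_succ A HA) Hkey
    (gap_count_sum_le A B HA)) as Hsq.
  apply INR_mul_sqrt_le in Hsq. rewrite mult_INR in Hsq. simpl in Hsq. lra.
Qed.
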